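(* For positive integers $a$ and $n$, $$M_n(a,1,1)=\sum_{k=0}^n\Psi_{n-1}(k,a,1,1).$$
   Context: All constant terms are taken with $\operatorname{CT}_x=\operatorname{CT}_{x_n}\cdots\operatorname{CT}_{x_1}$ (iterated constant-term extraction), where $(1-x_i)^{-b}$ and $x_i/(1-x_i)$ are expanded as power series in $x_i$, and for $i<j$, $(x_j-x_i)^{-c}=x_j^{-c}(1-x_i/x_j)^{-c}$ is expanded as a power series in $x_i/x_j$. $$M_n(a,b,c):=\operatorname{CT}_x\prod_{i=1}^n(1-x_i)^{-b}x_i^{-a+1}\prod_{1\le i<j\le n}(x_j-x_i)^{-c},$$ $$\Psi_n(k,a,b,c):=\operatorname{CT}_x[t^k]\prod_{i=1}^n(1-x_i)^{-b}x_i^{-a+1}\Big(1+t\frac{x_i}{1-x_i}\Big)\prod_{1\le i<j\le n}(x_j-x_i)^{-c},$$ with $[t^k]$ the coefficient of $t^k$; empty products equal $1$ (so $\Psi_0(k,\cdot)$ is $1$ for $k=0$ and $0$ otherwise). *)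

From mathcomp Require Import all_boot all_algebra.

Set Implicit Arguments.
Unset Strict Implicit.
Unset Printing Implicit Defensive.

Import GRing.Theory.
Local Open Scope ring_scope.

(* Explicit expansion of the iterated constant term
     CT_x prod_i F_i(x_i) x_i^{-a+1} prod_{i<j} (x_j - x_i)^{-c},
   where F_i(x_i) = sum_m f i m x_i^m is a power series in x_i and
   (x_j - x_i)^{-c} = sum_p C(c+p-1,p) x_i^p x_j^{-c-p}  (i<j).
   A term of the full expansion is indexed by m : 'I_n -> nat (the exponent
   picked in F_i) and p i j (i<j) (the exponent picked in the (i,j) factor);
   the exponent of x_i in that term is
     m i - (a-1) + sum_{j>i} p i j - sum_{k<i} (c + p k i).
   The iterated constant term is the (finite) sum of the coefficients of the
   terms in which every exponent is 0.  Every such solution has all entries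
   bounded by (a + n c)(2^n - 1) < ct_bound n a c, so summing over indices
   below ct_bound loses nothing. *)

Definition ct_bound (n a c : nat) : nat := ((a + n * c) * 2 ^ n).+1.

Definition ct_valid (n a c : nat) (m : 'I_n -> nat) (p : 'I_n -> 'I_n -> nat)
  : bool :=
  [forall i : 'I_n,
     (m i)%:Z - (a%:Z - 1)
     + (\sum_(j : 'I_n | (i < j)%N) (p i j)%:Z)
     - (\sum_(k : 'I_n | (k < i)%N) (c + p k i)%:Z) == 0]
  && [forall i : 'I_n, forall j : 'I_n, ~~ (i < j)%N ==> (p i j == 0%N)].

Definition iterCT (R : comNzRingType) (n a c : nat) (f : 'I_n -> nat -> R) : R :=
  \sum_(m : {ffun 'I_n -> 'I_(ct_bound n a c)})
   \sum_(p : {ffun 'I_n * 'I_n -> 'I_(ct_bound n a c)}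
          | ct_valid a c (fun i => nat_of_ord (m i))
                         (fun i j => nat_of_ord (p (i, j))))
     ((\prod_(i : 'I_n) f i (m i))
      * \prod_(i : 'I_n) \prod_(j : 'I_n | (i < j)%N)
          ('C(c + p (i, j) - 1, p (i, j)))%:R).

(* coefficient of x^m in (1-x)^{-b} *)
Definition negbin_coef (b m : nat) : nat := 'C(b + m - 1, m).
(* coefficient of x^m in x/(1-x) *)
Definition geom1_coef (m : nat) : nat := (0 < m)%N.

Definition M (n a b c : nat) : rat :=
  @iterCT rat n a c (fun _ m => (negbin_coef b m)%:R).

(* coefficient of x^m in (1-x)^{-b} (1 + t x/(1-x)), as a polynomial in t *)
Definition psi_coef (b m : nat) : {poly rat} :=
  ((negbin_coef b m)%:R)%:P
  + 'X * ((\sum_(l < m.+1) negbin_coef b l * geom1_coef (m - l))%N%:R)%:P.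

Definition Psi (n k a b c : nat) : rat :=
  (@iterCT {poly rat} n a c (fun _ m => psi_coef b m))`_k.

From mathcomp Require Import all_boot all_algebra zify.

Set Implicit Arguments.
Unset Strict Implicit.
Unset Printing Implicit Defensive.
Import GRing.Theory.

(* With b = c = 1 every binomial weight of the expansion is 1, so M_n(a,1,1)
   counts the strictly upper triangular arrays p of naturals whose excesses
     e_i = a - 1 + sum_{k<i} (1 + p_ki) - sum_{j>i} p_ij
   are all nonnegative (the exponent picked from (1 - x_i)^{-1} is then forced
   to be e_i).  Deleting the last row and column of such an array leaves an
   admissible array of size n - 1; the deleted row is 0 and the deleted column
   is any vector with p_k <= e_k, so each array of size n - 1 has
   prod_k (e_k + 1) extensions.  On the other side, the coefficient of x^m in
   (1 - x)^{-1} (1 + t x/(1 - x)) is 1 + m t, so summing Psi_{n-1}(k,a,1,1)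
   over all k sets t = 1 and weights each array of size n - 1 by the same
   product.  Truncating the summation ranges at ct_bound loses nothing because
   the inflows of an admissible array at most double from one index to the
   next. *)

Lemma sum_pow2 i : (\sum_(k < i) 2 ^ k).+1 = 2 ^ i.
Proof. by elim: i => [|i IH]; rewrite ?big_ord0 // big_ord_recr /= -addSn IH expnS; lia. Qed.

Lemma leq_pow2_of_leq_sum_prev n (x : 'I_n -> nat) A :
  (forall i, x i <= A + \sum_(k : 'I_n | k < i) x k) -> forall i, x i <= A * 2 ^ i.
Proof.
move=> x_le; suff x_le_lt m (i : 'I_n) : i < m -> x i <= A * 2 ^ i.
  by move=> i; apply: x_le_lt (ltnSn i).
elim: m i => [//|m IH] i; rewrite ltnS => le_im.
apply: leq_trans (x_le i) _.
have -> : A * 2 ^ i = A + \sum_(k : 'I_n | k < i) A * 2 ^ k.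
  by rewrite -big_distrr -big_ord_widen 1?ltnW //= -sum_pow2 mulnSr addnC.
by rewrite leq_add2l; apply: leq_sum => k lt_ki; apply: IH; apply: leq_trans le_im.
Qed.

Lemma count_ffun_le n B (e : 'I_n -> nat) : (forall k, e k < B) ->
  \sum_(f : {ffun 'I_n -> 'I_B} | [forall k, f k <= e k]) 1 = \prod_k (e k).+1.
Proof.
move=> e_lt; rewrite (eq_bigl (mem (family (fun k (x : 'I_B) => x <= e k)))); last first.
  by move=> f; apply/forallP/familyP.
rewrite (eq_bigr (fun=> \prod_(k < n) 1)) => [|f _]; last by rewrite big1_eq.
rewrite -(bigA_distr_big_dep _ (fun _ _ => 1)); apply: eq_bigr => k _.
rewrite -[(e k).+1]card_ord -sum1_card (big_ord_widen B (fun=> 1) (e_lt k)).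
by apply: eq_bigl.
Qed.

Section Admissible.
Variables n a c : nat.
Implicit Types (P : 'I_n -> 'I_n -> nat) (i j k : 'I_n).

(* In the term of the expansion indexed by P, the variable x_i gets exponent
   -(inflow P i) from x_i^(1-a) and the factors (x_i - x_k)^(-c), k < i, and
   exponent +(outflow P i) from the factors (x_j - x_i)^(-c), j > i. *)
Definition inflow P i := a - 1 + \sum_(k : 'I_n | k < i) (c + P k i).
Definition outflow P i := \sum_(j : 'I_n | i < j) P i j.
Definition excess P i := inflow P i - outflow P i.
Definition strictly_upper P :=
  [forall i : 'I_n, forall j : 'I_n, ~~ (i < j) ==> (P i j == 0)].
Definition admissible P :=
  [forall i : 'I_n, outflow P i <= inflow P i] && strictly_upper P.

Lemma ct_validE P (m : 'I_n -> nat) : 0 < a ->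
  ct_valid a c m P = admissible P && [forall i, m i == excess P i].
Proof.
move=> a_gt0.
have sumZ (F : 'I_n -> nat) (Q : pred 'I_n) :
    (\sum_(k | Q k) Posz (F k))%R = Posz (\sum_(k | Q k) F k).
  by rewrite (big_morph Posz PoszD (erefl 0%Z)).
have rowE (e x y : nat) : (Posz e - (Posz a - 1) + Posz x - Posz y == 0)%R
    = (x <= a - 1 + y) && (e == a - 1 + y - x).
  by apply/eqP/andP => [? | [? /eqP ?]]; [split; [|apply/eqP] | ]; lia.
rewrite /ct_valid /admissible andbAC; congr (_ && _).
apply/forallP/andP => [valid | [/forallP out_le /forallP m_eq] i].
  by split; apply/forallP => i; move: (valid i); rewrite !sumZ rowE => /andP[].
by rewrite !sumZ rowE out_le m_eq.
Qed.

Lemma entry_le_outflow P i j : i < j -> P i j <= outflow P i.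
Proof. by move=> lt_ij; rewrite /outflow (bigD1 j) //= leq_addr. Qed.

Lemma inflow_le_pow2 P i : admissible P -> inflow P i <= (a - 1 + n * c) * 2 ^ i.
Proof.
case/andP=> /forallP out_le _; apply: leq_pow2_of_leq_sum_prev => {}i.
rewrite {1}/inflow big_split /= -addnA leq_add2l leq_add //.
  by rewrite sum_nat_const leq_mul2r -[leqRHS]card_ord max_card orbT.
by apply: leq_sum => k lt_ki; apply: leq_trans (entry_le_outflow P lt_ki) (out_le k).
Qed.

Lemma inflow_lt_bound P i : admissible P -> inflow P i < ct_bound n a c.
Proof.
move=> adm; rewrite ltnS; apply: leq_trans (inflow_le_pow2 i adm) _.
by apply: leq_mul; [lia | rewrite leq_exp2l // ltnW].
Qed.

Lemma excess_lt_bound P i : admissible P -> excess P i < ct_bound n a c.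
Proof. by move=> adm; apply: leq_ltn_trans (leq_subr _ _) (inflow_lt_bound i adm). Qed.

Lemma entry_lt_bound P i j : admissible P -> P i j < ct_bound n a c.
Proof.
move=> adm; case: (ltnP i j) => [lt_ij | le_ji].
  apply: leq_ltn_trans (entry_le_outflow P lt_ij) _.
  by apply: leq_ltn_trans (forallP (andP adm).1 i) (inflow_lt_bound i adm).
have /andP[_ /forallP/(_ i)/forallP/(_ j)] := adm.
by rewrite -leqNgt le_ji => /eqP ->.
Qed.

Lemma eq_inflow P1 P2 : P1 =2 P2 -> inflow P1 =1 inflow P2.
Proof. by move=> eq_P i; rewrite /inflow; under eq_bigr do rewrite eq_P. Qed.

Lemma eq_outflow P1 P2 : P1 =2 P2 -> outflow P1 =1 outflow P2.
Proof. by move=> eq_P i; rewrite /outflow; under eq_bigr do rewrite eq_P. Qed.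

Lemma eq_excess P1 P2 : P1 =2 P2 -> excess P1 =1 excess P2.
Proof. by move=> eq_P i; rewrite /excess (eq_inflow eq_P) (eq_outflow eq_P). Qed.

Lemma eq_admissible P1 P2 : P1 =2 P2 -> admissible P1 = admissible P2.
Proof.
move=> eq_P; rewrite /admissible /strictly_upper.
congr andb; apply: eq_forallb => i; first by rewrite (eq_inflow eq_P) (eq_outflow eq_P).
by apply: eq_forallb => j; rewrite eq_P.
Qed.

End Admissible.

Lemma big_ord_lift_max (R : Type) (idx : R) (op : Monoid.com_law idx) n
    (P : pred 'I_n.+1) (F : 'I_n.+1 -> R) :
  \big[op/idx]_(i | P i) F i =
  op (\big[op/idx]_(i < n | P (lift ord_max i)) F (lift ord_max i))
     (if P ord_max then F ord_max else idx).
Proof. by rewrite big_mkcond (bigD1_ord ord_max) //= Monoid.mulmC -big_mkcond. Qed.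

Lemma forall_lift_max n (P : pred 'I_n.+1) :
  [forall i, P i] = [forall i : 'I_n, P (lift ord_max i)] && P ord_max.
Proof.
apply/forallP/andP => [P_all | [/forallP P_lift P_max] i]; first by split; [apply/forallP|].
by case: (unliftP ord_max i) => [j|] ->.
Qed.

Section LastRowColumn.
Variables n a c : nat.
Implicit Types (Q : 'I_n.+1 -> 'I_n.+1 -> nat) (k : 'I_n).

Definition restr_mx Q : 'I_n -> 'I_n -> nat :=
  fun i j => Q (lift ord_max i) (lift ord_max j).
Definition last_col Q : 'I_n -> nat := fun k => Q (lift ord_max k) ord_max.

Lemma inflow_lift Q k : inflow a c Q (lift ord_max k) = inflow a c (restr_mx Q) k.
Proof.
rewrite /inflow big_ord_lift_max; under eq_bigl do rewrite !lift_max.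
by rewrite lift_max /= ltnNge ltnW // addn0.
Qed.

Lemma outflow_lift Q k :
  outflow Q (lift ord_max k) = outflow (restr_mx Q) k + last_col Q k.
Proof.
rewrite /outflow big_ord_lift_max; under eq_bigl do rewrite !lift_max.
by rewrite lift_max /= ltn_ord.
Qed.

Lemma outflow_max Q : outflow Q ord_max = 0.
Proof. by rewrite /outflow big_pred0 // => j; rewrite ltnNge leq_ord. Qed.

Lemma strictly_upper_liftE Q :
  strictly_upper Q = strictly_upper (restr_mx Q) && [forall j, Q ord_max j == 0].
Proof.
rewrite /strictly_upper [LHS]forall_lift_max; congr andb.
  apply: eq_forallb => i; rewrite forall_lift_max [in X in _ && X]lift_max ltn_ord andbT.
  by apply: eq_forallb => j; rewrite !lift_max.
by apply: eq_forallb => j; rewrite ltnNge leq_ord.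
Qed.

Lemma admissible_liftE Q :
  admissible a c Q = [&& admissible a c (restr_mx Q),
                         [forall k, last_col Q k <= excess a c (restr_mx Q) k] &
                         [forall j, Q ord_max j == 0]].
Proof.
rewrite /admissible strictly_upper_liftE.
rewrite (forall_lift_max (fun i => outflow Q i <= inflow a c Q i)) /= outflow_max andbT.
have -> : [forall k, outflow Q (lift ord_max k) <= inflow a c Q (lift ord_max k)] =
    [forall k, outflow (restr_mx Q) k <= inflow a c (restr_mx Q) k] &&
    [forall k, last_col Q k <= excess a c (restr_mx Q) k].
  apply/forallP/andP => [flow_le | [/forallP out_le /forallP col_le] k].
    by split; apply/forallP => k; move: (flow_le k);
      rewrite outflow_lift inflow_lift /excess; lia.
  by move: (out_le k) (col_le k); rewrite outflow_lift inflow_lift /excess; lia.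
by rewrite -!andbA; congr andb; rewrite andbCA.
Qed.

End LastRowColumn.

Lemma ct_inordK n a c m :
  m < ct_bound n a c -> (inord m : 'I_(ct_bound n a c)) = m :> nat.
Proof. exact: inordK. Qed.

Definition entries n B (p : {ffun 'I_n * 'I_n -> 'I_B}) : 'I_n -> 'I_n -> nat :=
  fun i j => p (i, j).

Section ConstantTermExpansion.
Local Open Scope ring_scope.

Definition ct_weight (R : nzSemiRingType) n c (P : 'I_n -> 'I_n -> nat) : R :=
  \prod_(i : 'I_n) \prod_(j : 'I_n | (i < j)%N) ('C(c + P i j - 1, P i j))%:R.

Lemma ct_weight1 (R : nzSemiRingType) n (P : 'I_n -> 'I_n -> nat) :
  ct_weight R 1 P = 1.
Proof. by apply: big1 => i _; apply: big1 => j _; rewrite add1n subn1 binn. Qed.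

Lemma iterCT_admissible (R : comNzRingType) n a c (f : 'I_n -> nat -> R) :
  (0 < a)%N ->
  iterCT a c f =
  \sum_(p : {ffun 'I_n * 'I_n -> 'I_(ct_bound n a c)} | admissible a c (entries p))
     (\prod_i f i (excess a c (entries p) i)) * ct_weight R c (entries p).
Proof.
move=> a_gt0; rewrite /iterCT (exchange_big_dep xpredT) //= [RHS]big_mkcond.
apply: eq_bigr => p _; under eq_bigl => m do rewrite ct_validE //.
case: ifP => adm; last by rewrite big_pred0 // => m; rewrite adm.
pose m0 : {ffun 'I_n -> 'I_(ct_bound n a c)} :=
  [ffun i => inord (excess a c (entries p) i)].
have excessK i : (inord (excess a c (entries p) i) : 'I_(ct_bound n a c))
                 = excess a c (entries p) i :> nat.
  by rewrite ct_inordK //; apply: excess_lt_bound.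
rewrite (big_pred1 m0) => [|m].
  by congr (_ * _); apply: eq_bigr => i _; rewrite ffunE excessK.
rewrite /=; apply/forallP/eqP => [m_eq | -> i]; last by rewrite ffunE; apply/eqP/excessK.
apply/ffunP => i; apply: ord_inj; rewrite ffunE.
exact: etrans (eqP (m_eq i)) (esym (excessK i)).
Qed.

End ConstantTermExpansion.

Lemma leq_ct_boundS n a c : ct_bound n a c <= ct_bound n.+1 a c.
Proof.
by rewrite ltnS; apply: leq_mul; [rewrite leq_add2l leq_mul2r leqnSn orbT | rewrite leq_exp2l].
Qed.

Section Extension.
Variables n a c : nat.
Local Notation B := (ct_bound n.+1 a c).
Local Notation B' := (ct_bound n a c).

Definition extend_ffun (p : {ffun 'I_n * 'I_n -> 'I_B'}) (col : {ffun 'I_n -> 'I_B}) :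
    {ffun 'I_n.+1 * 'I_n.+1 -> 'I_B} :=
  [ffun ij => match unlift ord_max ij.1, unlift ord_max ij.2 with
              | Some i, Some j => widen_ord (leq_ct_boundS n a c) (p (i, j))
              | Some i, None => col i
              | None, _ => ord0
              end].

Definition restr_ffun (q : {ffun 'I_n.+1 * 'I_n.+1 -> 'I_B}) :
    {ffun 'I_n * 'I_n -> 'I_B'} :=
  [ffun ij => inord (q (lift ord_max ij.1, lift ord_max ij.2))].

Definition last_col_ffun (q : {ffun 'I_n.+1 * 'I_n.+1 -> 'I_B}) : {ffun 'I_n -> 'I_B} :=
  [ffun k => q (lift ord_max k, ord_max)].

Lemma extend_lift p col i j :
  extend_ffun p col (lift ord_max i, lift ord_max j) = p (i, j) :> nat.
Proof. by rewrite ffunE /= !liftK. Qed.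

Lemma extend_last_col p col k : extend_ffun p col (lift ord_max k, ord_max) = col k.
Proof. by rewrite ffunE /= liftK unlift_none. Qed.

Lemma extend_last_row p col j : extend_ffun p col (ord_max, j) = 0 :> nat.
Proof. by rewrite ffunE /= unlift_none. Qed.

Lemma restr_extend p col : restr_ffun (extend_ffun p col) = p.
Proof. by apply/ffunP => -[i j]; apply: ord_inj; rewrite ffunE extend_lift ct_inordK. Qed.

Lemma last_col_extend p col : last_col_ffun (extend_ffun p col) = col.
Proof. by apply/ffunP => k; rewrite ffunE extend_last_col. Qed.

Lemma admissible_extend p col :
  admissible a c (entries (extend_ffun p col)) =
  admissible a c (entries p) && [forall k, col k <= excess a c (entries p) k].
Proof.
have restrE : restr_mx (entries (extend_ffun p col)) =2 entries p.
  by move=> i j; rewrite /restr_mx /entries extend_lift.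
rewrite admissible_liftE (eq_admissible a c restrE).
rewrite (eq_forallb (fun k => congr1 _ (eq_excess a c restrE k))) /=.
have last_row0 : [forall j, entries (extend_ffun p col) ord_max j == 0].
  by apply/forallP => j; rewrite /entries extend_last_row.
rewrite last_row0 andbT; congr andb.
by apply: eq_forallb => k; rewrite /last_col /entries extend_last_col.
Qed.

Lemma extend_restr q : admissible a c (entries q) ->
  extend_ffun (restr_ffun q) (last_col_ffun q) = q.
Proof.
rewrite admissible_liftE => /and3P[adm_restr _ /forallP last_row0].
apply/ffunP => -[i j]; apply: ord_inj.
case: (unliftP ord_max i) => [i'|] ->; last first.
  by rewrite extend_last_row; apply/esym/eqP/last_row0.
case: (unliftP ord_max j) => [j'|] ->; last by rewrite extend_last_col ffunE.
by rewrite extend_lift ffunE ct_inordK //; apply: (entry_lt_bound i' j' adm_restr).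
Qed.

Lemma count_admissible_succ :
  \sum_(q : {ffun 'I_n.+1 * 'I_n.+1 -> 'I_B} | admissible a c (entries q)) 1 =
  \sum_(p : {ffun 'I_n * 'I_n -> 'I_B'} | admissible a c (entries p))
     \prod_k (excess a c (entries p) k).+1.
Proof.
rewrite (reindex_onto (fun pc => extend_ffun pc.1 pc.2)
                      (fun q => (restr_ffun q, last_col_ffun q))) /=; last exact: extend_restr.
transitivity (\sum_(p : {ffun 'I_n * 'I_n -> 'I_B'} | admissible a c (entries p))
  \sum_(col : {ffun 'I_n -> 'I_B} | [forall k, col k <= excess a c (entries p) k]) 1).
  rewrite pair_big_dep; apply: eq_bigl => -[p col].
  by rewrite /= admissible_extend restr_extend last_col_extend eqxx andbT.
apply: eq_bigr => p adm; apply: count_ffun_le => k.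
exact: leq_trans (excess_lt_bound k adm) (leq_ct_boundS n a c).
Qed.

End Extension.

Section Polynomials.
Local Open Scope ring_scope.

Lemma iterCT_rmorph (R S : comNzRingType) (g : {rmorphism R -> S}) n a c
    (f : 'I_n -> nat -> R) :
  g (iterCT a c f) = iterCT a c (fun i m => g (f i m)).
Proof.
rewrite /iterCT rmorph_sum; apply: eq_bigr => m _; rewrite rmorph_sum.
apply: eq_bigr => p _; rewrite rmorphM !rmorph_prod; congr (_ * _).
by apply: eq_bigr => i _; rewrite rmorph_prod; apply: eq_bigr => j _; rewrite rmorph_nat.
Qed.

Lemma size_prod_le (R : nzSemiRingType) n (F : 'I_n -> {poly R}) :
  (forall i, (size (F i) <= 2)%N) -> (size (\prod_i F i)%R <= n.+1)%N.
Proof.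
move=> size_F; apply: leq_trans (size_poly_prod_leq _ _) _.
have : (\sum_i size (F i) <= \sum_(i < n) 2)%N by apply: leq_sum => i _.
by rewrite sum_nat_const !card_ord; lia.
Qed.

Lemma size_iterCT_le (R : comNzRingType) n a c (f : 'I_n -> nat -> {poly R}) :
  (forall i m, (size (f i m) <= 2)%N) -> (size (iterCT a c f) <= n.+1)%N.
Proof.
move=> size_f; rewrite /iterCT.
have size_add (q1 q2 : {poly R}) :
    (size q1 <= n.+1 -> size q2 <= n.+1 -> size (q1 + q2)%R <= n.+1)%N.
  by move=> ? ?; apply: leq_trans (size_polyD _ _) _; rewrite geq_max; apply/andP.
have size0 : (size (0 : {poly R})%R <= n.+1)%N by rewrite size_poly0.
pose small (q : {poly R}) := (size q <= n.+1)%N.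
apply: (big_ind small) => // m _; apply: (big_ind small) => // p _; rewrite /small.
under [X in (_ * X)%R]eq_bigr do rewrite -natr_prod.
rewrite -natr_prod -polyC_natr mulrC mul_polyC.
exact: leq_trans (size_scale_leq _ _) (size_prod_le (fun i => size_f i (m i))).
Qed.

Lemma sum_coef_horner1 (R : nzSemiRingType) N (q : {poly R}) :
  (size q <= N)%N -> \sum_(k < N) q`_k = q.[1].
Proof.
move=> size_q; rewrite (horner_coef_wide _ size_q).
by apply: eq_bigr => k _; rewrite expr1n mulr1.
Qed.

Lemma negbin_coef1 m : negbin_coef 1 m = 1%N.
Proof. by rewrite /negbin_coef add1n subn1 binn. Qed.

Lemma psi_coef1 m : psi_coef 1 m = 1 + m%:R *: 'X.
Proof.
have sum_geom1 : (\sum_(l < m.+1) negbin_coef 1 l * geom1_coef (m - l))%N = m.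
  rewrite big_ord_recr /= subnn muln0 addn0 -[RHS]card_ord -sum1_card.
  by apply: eq_bigr => l _; rewrite negbin_coef1 /geom1_coef subn_gt0 ltn_ord.
by rewrite /psi_coef sum_geom1 negbin_coef1 polyC1 mulrC mul_polyC.
Qed.

Lemma horner_psi_coef1 m : (psi_coef 1 m).[1] = m.+1%:R.
Proof. by rewrite psi_coef1 hornerD hornerC hornerZ hornerX mulr1 mulrS. Qed.

Lemma size_psi_coef1 m : (size (psi_coef 1 m) <= 2)%N.
Proof.
rewrite psi_coef1; apply: leq_trans (size_polyD _ _) _.
by rewrite geq_max size_poly1 (leq_trans (size_scale_leq _ _)) ?size_polyX.
Qed.

End Polynomials.

Local Open Scope ring_scope.

Theorem corollary5p9 (a n : nat) :
  (0 < a)%N -> (0 < n)%N ->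
  M n a 1 1 = \sum_(k < n.+1) Psi n.-1 k a 1 1.
Proof.
move=> a_gt0; case: n => [//|n] _ /=.
rewrite /Psi sum_coef_horner1; last first.
  exact: leq_trans (size_iterCT_le _ _ (fun _ => size_psi_coef1)) (leqnSn _).
rewrite -[_.[1]]/(horner_eval 1 _) iterCT_rmorph /M !iterCT_admissible //.
rewrite (eq_bigr (fun _ => 1%N%:R)) => [|q _]; last first.
  by rewrite ct_weight1 mulr1 big1 // => i _; rewrite negbin_coef1.
rewrite -natr_sum count_admissible_succ natr_sum; apply: eq_bigr => p _.
rewrite ct_weight1 mulr1 natr_prod; apply: eq_bigr => i _.
exact: esym (horner_psi_coef1 _).
Qed.
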